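(* Let $k$ be an algebraically closed field and $\Lambda=kQ/I$ ($Q$ finite quiver, $I$ admissible) satisfy condition (C) below with vertices $1,\dots,n$ labelled so that $Q^{\circ}$ has arrows between $i$ and $i+1$. For every $\mathbf{i}=\{i_0<i_1<\cdots<i_{2m}\}\in\Xi$, the two-term complex $X_{\mathbf{i}}$ defined below is indecomposable in $K^b(\operatorname{proj}\Lambda)$.
   Context: Condition (C): (a) $Q^{\circ}$ ($Q$ with loops deleted) has vertices $1,\dots,n$ and exactly one arrow $i\to i+1$ and one arrow $i+1\to i$ for each $1\le i\le n-1$, no others; (b) for each arrow $x:i\to j$ of $Q$ with $i\ne j$, $x\Lambda e_j=e_i\Lambda e_j=e_i\Lambda x$; (c) for all vertices $i,j$, $w^i_j\neq0$ in $\Lambda$, where $w^i_j$ is the shortest path from $i$ to $j$ (paths composed left to right). $P_i=e_i\Lambda$ for $1\le i\le n$ and $P_0=P_{n+1}=0$. For vertices $i,j$, $f^j_i:P_i\to P_j$ is $e_i\lambda\mapsto w^j_i\lambda$ (zero if $P_i$ or $P_j$ is $0$). $\Xi$ is the set of subsets $\mathbf{i}=\{i_0<\cdots<i_{2m}\}\subseteq\{0,\dots,n+1\}$, $m\ge0$, with $\mathbf{i}\ne\{0\},\{n+1\}$. $X_{\mathbf{i}}$ is the complex with $X^{-1}_{\mathbf{i}}=\bigoplus_{t=0}^{m}P_{i_{2t}}$ in degree $-1$, $X^0_{\mathbf{i}}=\bigoplus_{t=1}^{m}P_{i_{2t-1}}$ in degree $0$, and differential whose only nonzero components are $f^{i_{2t+1}}_{i_{2t}}:P_{i_{2t}}\to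 P_{i_{2t+1}}$ ($0\le t\le m-1$) and $f^{i_{2t-1}}_{i_{2t}}:P_{i_{2t}}\to P_{i_{2t-1}}$ ($1\le t\le m$). *)

From HB Require Import structures.
From mathcomp Require Import all_boot all_order all_algebra all_field.
Set Implicit Arguments. Unset Strict Implicit. Unset Printing Implicit Defensive.
Import GRing.Theory.
Local Open Scope ring_scope.

Section BoundQuiver.
Variables (k : fieldType) (A : falgType k) (n : nat) (Arr : finType)
  (src tgt : Arr -> nat) (e : nat -> A) (a : Arr -> A).

Definition vtx (i : nat) : bool := (1 <= i <= n)%N.

(* e_i extended by 0 outside 1..n, so that P_0 = P_{n+1} = 0 Λ = 0 *)
Definition ev (i : nat) : A := if vtx i then e i else 0.

(* image in Λ of the path of arrows p (composed left to right) *)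
Definition pathv (p : seq Arr) : A := \prod_(x <- p) a x.

Definition paths_len (l : nat) : seq A :=
  [seq pathv (tval p) | p <- enum {: l.-tuple Arr}].

(* Λ = kQ/I with I admissible, where e_i, a_x are the images of the trivial
   paths and of the arrows under the (surjective) algebra map kQ -> Λ. *)
Definition bound_quiver_algebra : Prop :=
  [/\
      (forall x, vtx (src x) /\ vtx (tgt x)),
      (* relations of kQ: orthogonal idempotents summing to 1, arrows x : i -> j
         satisfy x = e_i x e_j *)
      (forall i j, vtx i -> vtx j -> e i * e j = if i == j then e i else 0),
      \sum_(1 <= i < n.+1) e i = 1,
      (forall x, a x = e (src x) * a x * e (tgt x)) &
      exists N : nat, [/\ (2 <= N)%N,
        (* surjectivity of kQ -> Λ : Λ is spanned by (images of) paths *)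
        (fullv <= <<[seq e i | i <- iota 1 n] ++ flatten [seq paths_len l | l <- iota 1 N]>>)%VS,
        (* R^N ⊆ I *)
        (forall p : N.-tuple Arr, pathv p = 0) &
        (* I ⊆ R^2 : no nonzero combination of trivial paths and arrows
           lies in I + R^2 *)
        (forall (c : nat -> k) (d : Arr -> k),
           (\sum_(1 <= i < n.+1) c i *: e i + \sum_x d x *: a x
              \in <<flatten [seq paths_len l | l <- iota 2 (N - 2)]>>%VS) ->
           (forall i, vtx i -> c i = 0) /\ (forall x, d x = 0))]].

Definition arr (i j : nat) : A :=
  odflt 0 (omap a [pick x | (src x == i) && (tgt x == j)]).

Definition wpath (i j : nat) : A :=
  if (i <= j)%N then ev i * \prod_(0 <= r < j - i) arr (i + r) (i + r).+1
  else ev i * \prod_(0 <= r < i - j) arr (i - r) (i - r).-1.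

(* f^j_i : P_i -> P_j, given by left multiplication by w^j_i ∈ e_j Λ e_i *)
Definition fmap (j i : nat) : A := ev j * wpath j i * ev i.

Definition condC : Prop :=
  [/\
      (forall x, src x <> tgt x ->
          tgt x = (src x).+1 \/ src x = (tgt x).+1),
      (forall i, (1 <= i < n)%N ->
          #|[pred x | (src x == i) && (tgt x == i.+1)]| = 1%N /\
          #|[pred x | (src x == i.+1) && (tgt x == i)]| = 1%N),
      (forall x, src x <> tgt x -> forall y : A,
         ((exists l, y = a x * l * e (tgt x)) <-> (exists l, y = e (src x) * l * e (tgt x))) /\
         ((exists l, y = e (src x) * l * e (tgt x)) <-> (exists l, y = e (src x) * l * a x))) &
      (forall i j, vtx i -> vtx j -> wpath i j != 0)].

(* A Λ-linear map ⊕_s P_{u s} -> ⊕_r P_{v r} is a matrix M with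
   M r s ∈ e_{v r} Λ e_{u s}, acting by left multiplication;
   composition is the matrix product. *)
Definition hommx (p q : nat) (v : 'I_p -> nat) (u : 'I_q -> nat) (M : 'M[A]_(p, q)) :=
  forall r s, M r s = ev (v r) * M r s * ev (u s).

Definition idmx (q : nat) (u : 'I_q -> nat) : 'M[A]_q :=
  \matrix_(r, s) (if r == s then ev (u r) else 0).

(* complex X : degree -1 = ⊕_s P_{u s}, degree 0 = ⊕_r P_{v r}, differential D *)
Definition chain_endo (p q : nat) (v : 'I_p -> nat) (u : 'I_q -> nat)
  (D : 'M[A]_(p, q)) (F1 : 'M[A]_q) (F0 : 'M[A]_p) : Prop :=
  [/\ hommx u u F1, hommx v v F0 & D *m F1 = F0 *m D].

Definition null_homotopic (p q : nat) (v : 'I_p -> nat) (u : 'I_q -> nat)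
  (D : 'M[A]_(p, q)) (F1 : 'M[A]_q) (F0 : 'M[A]_p) : Prop :=
  exists H : 'M[A]_(q, p), [/\ hommx u v H, F1 = H *m D & F0 = D *m H].

(* indecomposable in K^b(proj Λ): X is nonzero in the homotopy category and
   End_{K^b}(X) has no idempotents other than 0 and 1. *)
Definition indecomposableK (p q : nat) (v : 'I_p -> nat) (u : 'I_q -> nat)
  (D : 'M[A]_(p, q)) : Prop :=
  hommx v u D /\
  ~ null_homotopic v u D (idmx u) (idmx v) /\
  forall F1 F0, chain_endo v u D F1 F0 ->
    null_homotopic v u D (F1 *m F1 - F1) (F0 *m F0 - F0) ->
    null_homotopic v u D F1 F0 \/
    null_homotopic v u D (F1 - idmx u) (F0 - idmx v).

End BoundQuiver.

(* Ξ : subsets {i_0 < ... < i_{2m}} of {0,...,n+1}, given as increasing lists *)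
Definition inXi (n : nat) (ii : seq nat) : bool :=
  [&& sorted ltn ii, all (fun i => i <= n.+1)%N ii, odd (size ii),
      ii != [:: 0%N] & ii != [:: n.+1]].

Definition mXi (ii : seq nat) : nat := (size ii)./2.

(* degree -1 : P_{i_{2t}}, t = 0..m ; degree 0 : P_{i_{2t+1}}, t = 0..m-1 *)
Definition Xi_deg1 (ii : seq nat) (s : 'I_(mXi ii).+1) : nat := nth 0%N ii (2 * s).
Definition Xi_deg0 (ii : seq nat) (r : 'I_(mXi ii)) : nat := nth 0%N ii (2 * r).+1.

Definition Xi_diff (k : fieldType) (A : falgType k) (n : nat) (Arr : finType)
  (src tgt : Arr -> nat) (e : nat -> A) (a : Arr -> A) (ii : seq nat)
  : 'M[A]_(mXi ii, (mXi ii).+1) :=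
  \matrix_(r, s)
    (if (s : nat) == r then fmap n src tgt e a (Xi_deg0 r) (Xi_deg1 s)
     else if (s : nat) == r.+1 then fmap n src tgt e a (Xi_deg0 r) (Xi_deg1 s)
     else 0).

From Pilot Require Import Defs.
From HB Require Import structures.
From mathcomp Require Import all_boot all_order all_algebra all_field.
From mathcomp Require Import zify.
Set Implicit Arguments. Unset Strict Implicit. Unset Printing Implicit Defensive.
Import GRing.Theory.
Local Open Scope ring_scope.

(* A chain endomorphism F of X_i acts on each summand P_j of its terms by a
   scalar modulo the radical R.  Condition (C)(b) gives e_x Λ e_z = w^x_z Λ, so
   R w ⊆ w R for the paths w, which are nonzero by (C)(c); comparing (D F)_rs
   with (F D)_rs modulo w R, where w = D_rs, forces adjacent summands to carry
   the same scalar, so F ≡ λ id modulo R for a single λ.  Null-homotopic maps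
   have their diagonal in R: hence id is not null-homotopic, and λ^2 = λ when
   F^2 - F is null-homotopic.  Then F (if λ = 0) or id - F (if λ = 1) has all
   its entries in R; being homotopic to all of its powers and R being
   nilpotent, it is null-homotopic. *)

Lemma span_ind (K : fieldType) (vT : vectType K) (X : seq vT) (P : vT -> Prop) :
  P 0 -> (forall u v, P u -> P v -> P (u + v)) ->
  (forall c u, P u -> P (c *: u)) -> {in X, forall g, P g} ->
  forall v, v \in <<X>>%VS -> P v.
Proof.
move=> P0 PD PZ PX v /(@coord_span _ _ _ (in_tuple X)) ->.
by elim/big_ind: _ => // i _; apply/PZ/PX/mem_nth.
Qed.

Section QuiverAlgebra.
Variables (k : fieldType) (A : falgType k) (n : nat) (Arr : finType)
  (src tgt : Arr -> nat) (e : nat -> A) (a : Arr -> A).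
Hypothesis vtx_arrow : forall x, vtx n (src x) /\ vtx n (tgt x).
Hypothesis mul_e : forall i j, vtx n i -> vtx n j ->
  e i * e j = if i == j then e i else 0.
Hypothesis sum_e : \sum_(1 <= i < n.+1) e i = 1.
Hypothesis arrowE : forall x, a x = e (src x) * a x * e (tgt x).
Variable N : nat.
Hypothesis span_e_paths : (fullv <= <<[seq e i | i <- iota 1 n] ++
  flatten [seq paths_len a l | l <- iota 1 N]>>)%VS.
Hypothesis pathsN : forall p : N.-tuple Arr, pathv a p = 0.

Local Notation vtx := (vtx n).
Local Notation ev := (ev n e).

(** * Idempotents and powers of the radical *)

Lemma ev_vtx i : vtx i -> ev i = e i. Proof. by rewrite /ev => ->. Qed.
Lemma ev_nvtx i : ~~ vtx i -> ev i = 0. Proof. by rewrite /ev => /negbTE ->. Qed.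

Lemma e_idem i : vtx i -> e i * e i = e i.
Proof. by move=> vi; rewrite mul_e // eqxx. Qed.

Lemma e_orth i j : vtx i -> vtx j -> i != j -> e i * e j = 0.
Proof. by move=> vi vj /negbTE ij; rewrite mul_e // ij. Qed.

Lemma ev_idem i : ev i * ev i = ev i.
Proof. by rewrite /ev; case: ifP => [/e_idem //|]; rewrite mulr0. Qed.

Lemma e_arrow j x : vtx j -> e j * a x = if j == src x then a x else 0.
Proof.
move=> vj; rewrite {1}arrowE !mulrA mul_e //; last by case: (vtx_arrow x).
by case: eqP => [->|_]; rewrite -?arrowE ?mul0r.
Qed.

Lemma arrow_e j x : vtx j -> a x * e j = if j == tgt x then a x else 0.
Proof.
move=> vj; rewrite {1}arrowE -!mulrA mul_e //; last by case: (vtx_arrow x).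
by case: (eqVneq j (tgt x)) => _; rewrite ?mulrA -?arrowE ?mulr0.
Qed.

Lemma pathv_cons x p : pathv a (x :: p) = a x * pathv a p.
Proof. by rewrite /pathv big_cons. Qed.

Lemma pathv_rcons p x : pathv a (rcons p x) = pathv a p * a x.
Proof. by rewrite /pathv big_rcons. Qed.

Lemma pathv_cat p q : pathv a (p ++ q) = pathv a p * pathv a q.
Proof. by rewrite /pathv big_cat. Qed.

Lemma pathv_long (p : seq Arr) : (N <= size p)%N -> pathv a p = 0.
Proof.
move=> hp; rewrite -(cat_take_drop N p) pathv_cat.
have sz : size (take N p) == N by rewrite size_takel.
by have /= -> := pathsN (Tuple sz); rewrite mul0r.
Qed.

(* The m-th power of the arrow ideal; paths of length at least N vanish, so
   lengths m <= l < m + N suffice. *)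
Definition radpow (m : nat) : {vspace A} :=
  <<flatten [seq paths_len a l | l <- iota m N]>>%VS.

Lemma pathv_radpow m (p : seq Arr) : (m <= size p)%N -> pathv a p \in radpow m.
Proof.
move=> hm; have [hN|hN] := ltnP (size p) N; last by rewrite pathv_long ?mem0v.
apply/memv_span/flattenP; exists (paths_len a (size p)).
  by apply/mapP; exists (size p) => //; rewrite mem_iota hm /=; lia.
by apply/mapP; exists (in_tuple p); rewrite ?mem_enum.
Qed.

Lemma radpow_ind m (P : A -> Prop) :
  P 0 -> (forall u v, P u -> P v -> P (u + v)) -> (forall c u, P u -> P (c *: u)) ->
  (forall p : seq Arr, (m <= size p)%N -> P (pathv a p)) ->
  forall v, v \in radpow m -> P v.
Proof.
move=> P0 PD PZ Pp; apply: span_ind => // g /flattenP [s /mapP [l]].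
by rewrite mem_iota => /andP [ml _] -> /mapP [p _ ->]; apply: Pp; rewrite size_tuple.
Qed.

Lemma radpow_mono m m' : (m <= m')%N -> (radpow m' <= radpow m)%VS.
Proof.
move=> hm; apply/subvP; apply: radpow_ind => [|u v|c u|p hp]; rewrite ?mem0v //.
- exact: memvD.
- exact: memvZ.
- by apply: pathv_radpow; lia.
Qed.

Lemma radpow_mul i j u v : u \in radpow i -> v \in radpow j -> u * v \in radpow (i + j).
Proof.
move=> hu hv; move: u hu; apply: (radpow_ind (P := fun u => u * v \in _)).
- by rewrite mul0r mem0v.
- by move=> u w hu hw; rewrite mulrDl memvD.
- by move=> c u hu; rewrite -scalerAl memvZ.
move=> p hp; move: v hv; apply: (radpow_ind (P := fun v => _ * v \in _)).
- by rewrite mulr0 mem0v.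
- by move=> u w hu hw; rewrite mulrDr memvD.
- by move=> c u hu; rewrite -scalerAr memvZ.
by move=> q hq; rewrite -pathv_cat pathv_radpow // size_cat leq_add.
Qed.

Lemma radpow_eq0 m v : (N <= m)%N -> v \in radpow m -> v = 0.
Proof.
move=> hm; apply: (radpow_ind (P := fun v => v = 0)) => [|u w -> ->|c u ->|p hp].
- by [].
- exact: addr0.
- exact: scaler0.
- by apply: pathv_long; lia.
Qed.

Lemma algebra_ind (P : A -> Prop) :
  P 0 -> (forall u v, P u -> P v -> P (u + v)) -> (forall c u, P u -> P (c *: u)) ->
  (forall j, vtx j -> P (e j)) -> (forall p : seq Arr, (0 < size p)%N -> P (pathv a p)) ->
  forall v, P v.
Proof.
move=> P0 PD PZ Pe Pp v; have /(subvP span_e_paths) : v \in fullv by rewrite memvf.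
apply: span_ind => // g; rewrite mem_cat => /orP [/mapP [j] | /flattenP [s /mapP [l]]].
  by rewrite mem_iota => hj ->; apply: Pe; rewrite /Defs.vtx; lia.
by rewrite mem_iota => /andP [hl _] -> /mapP [p _ ->]; apply: Pp; rewrite size_tuple.
Qed.

Lemma e_radpow j m v : vtx j -> (0 < m)%N -> v \in radpow m -> e j * v \in radpow m.
Proof.
move=> vj hm; apply: (radpow_ind (P := fun v => e j * v \in _)).
- by rewrite mulr0 mem0v.
- by move=> u w hu hw; rewrite mulrDr memvD.
- by move=> c u hu; rewrite -scalerAr memvZ.
case=> [|x p] hp; first by rewrite /= in hp; lia.
rewrite pathv_cons mulrA e_arrow //; case: ifP => _; last by rewrite mul0r mem0v.
by rewrite -pathv_cons pathv_radpow.
Qed.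

Lemma radpow_e j m v : vtx j -> (0 < m)%N -> v \in radpow m -> v * e j \in radpow m.
Proof.
move=> vj hm; apply: (radpow_ind (P := fun v => v * e j \in _)).
- by rewrite mul0r mem0v.
- by move=> u w hu hw; rewrite mulrDl memvD.
- by move=> c u hu; rewrite -scalerAl memvZ.
case/lastP=> [|p x] hp; first by rewrite /= in hp; lia.
rewrite pathv_rcons -mulrA arrow_e //; case: ifP => _; last by rewrite mulr0 mem0v.
by rewrite -pathv_rcons pathv_radpow.
Qed.

Lemma radpow_mull m u v : (0 < m)%N -> v \in radpow m -> u * v \in radpow m.
Proof.
move=> hm hv; elim/algebra_ind: u => [|u w hu hw|c u hu|j vj|p hp].
- by rewrite mul0r mem0v.
- by rewrite mulrDl memvD.
- by rewrite -scalerAl memvZ.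
- exact: e_radpow.
- exact: (subvP (radpow_mono (leq_addl 1 m))) (radpow_mul (pathv_radpow hp) hv).
Qed.

Lemma radpow_mulr m u v : (0 < m)%N -> v \in radpow m -> v * u \in radpow m.
Proof.
move=> hm hv; elim/algebra_ind: u => [|u w hu hw|c u hu|j vj|p hp].
- by rewrite mulr0 mem0v.
- by rewrite mulrDr memvD.
- by rewrite -scalerAr memvZ.
- exact: radpow_e.
- exact: (subvP (radpow_mono (leq_addr 1 m))) (radpow_mul hv (pathv_radpow hp)).
Qed.

Lemma corner_scalar j v : exists c, ev j * v * ev j - c *: ev j \in radpow 1.
Proof.
have [vj|nvj] := boolP (vtx j); last first.
  by exists 0; rewrite ev_nvtx // mulr0 scaler0 subr0 mem0v.
rewrite ev_vtx //; elim/algebra_ind: v => [|u w [c hc] [d hd]|d u [c hc]|l vl|p hp].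
- by exists 0; rewrite mulr0 mul0r scale0r subr0 mem0v.
- by exists (c + d); rewrite mulrDr mulrDl scalerDl opprD addrACA memvD.
- by exists (d * c); rewrite -scalerAr -scalerAl -scalerA -scalerBr memvZ.
- have [->|ne] := eqVneq l j; first by exists 1; rewrite !e_idem // scale1r subrr mem0v.
  by exists 0; rewrite e_orth 1?eq_sym // mul0r scale0r subr0 mem0v.
- by exists 0; rewrite scale0r subr0 radpow_e // e_radpow // pathv_radpow.
Qed.

Lemma offcorner_radpow i j v : i != j -> ev i * v * ev j \in radpow 1.
Proof.
move=> ij; have [vi|nvi] := boolP (vtx i); last by rewrite (ev_nvtx nvi) !mul0r mem0v.
have [vj|nvj] := boolP (vtx j); last by rewrite (ev_nvtx nvj) mulr0 mem0v.
rewrite !ev_vtx //; elim/algebra_ind: v => [|u w hu hw|d u hu|l vl|p hp].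
- by rewrite mulr0 mul0r mem0v.
- by rewrite mulrDr mulrDl memvD.
- by rewrite -scalerAr -scalerAl memvZ.
- have [->|ne] := eqVneq l i; first by rewrite e_idem // e_orth // mem0v.
  by rewrite e_orth 1?eq_sym // mul0r mem0v.
- by rewrite radpow_e // e_radpow // pathv_radpow.
Qed.

(* If c != 0 then w ∈ R w + w R, hence w ∈ R^t for all t; but R^N = 0. *)
Lemma nakayama_scalar w c r q : w \in radpow 1 -> w != 0 ->
  r \in radpow 1 -> q \in radpow 1 -> c *: w = r * w + w * q -> c = 0.
Proof.
move=> hw nw hr hq hE; apply/eqP; apply: contraNT nw => nc; apply/eqP.
have wE : w = c^-1 *: (r * w + w * q) by rewrite -hE scalerA mulVf // scale1r.
suff wrad m : w \in radpow m.+1 by exact: radpow_eq0 (leqnSn N) (wrad N).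
elim: m => [//|m IH]; rewrite wE memvZ // memvD //.
  by rewrite -add1n radpow_mul.
by rewrite -addn1 radpow_mul.
Qed.

Lemma e_notin_radpow j : vtx j -> e j != 0 -> e j \notin radpow 1.
Proof.
move=> vj nj; apply/negP => hj.
have := @nakayama_scalar (e j) 1 (e j) 0 hj nj hj (mem0v _).
by rewrite mulr0 addr0 scale1r e_idem // => /(_ erefl) /eqP; rewrite oner_eq0.
Qed.

Lemma scalar_mod_radpow_uniq j v c d : vtx j -> e j != 0 ->
  v - c *: e j \in radpow 1 -> v - d *: e j \in radpow 1 -> c = d.
Proof.
move=> vj nj hc hd; apply/eqP; rewrite -subr_eq0; apply: contraLR (e_notin_radpow vj nj).
move=> ne; have hcd : (c - d) *: e j = v - d *: e j - (v - c *: e j).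
  by rewrite scalerBl opprB [RHS]addrC subrKA.
by rewrite negbK -[e j]scale1r -(mulVf ne) -scalerA hcd memvZ // memvB.
Qed.

(** * Shortest paths *)

Local Notation W := (wpath n src tgt e a).
Local Notation arrow := (arr src tgt a).

Lemma arrow_corner i j : vtx i -> vtx j ->
  e i * arrow i j = arrow i j /\ arrow i j * e j = arrow i j.
Proof.
move=> vi vj; rewrite /Defs.arr.
case: pickP => [y /andP [/eqP si /eqP tj]|_] /=; last by rewrite mulr0 mul0r.
by rewrite arrowE si tj !mulrA e_idem // -!mulrA e_idem.
Qed.

Lemma wpath_id x : W x x = ev x.
Proof. by rewrite /wpath leqnn subnn big_geq // mulr1. Qed.

Lemma ev_wpath x z : ev x * W x z = W x z.
Proof. by rewrite /wpath; case: ifP => _; rewrite mulrA ev_idem. Qed.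

Lemma wpath_upE x z : (x <= z)%N ->
  W x z = ev x * \prod_(0 <= r < z - x) arrow (x + r) (x + r).+1.
Proof. by rewrite /wpath => ->. Qed.

Lemma wpath_downE x z : (z <= x)%N ->
  W x z = ev x * \prod_(0 <= r < x - z) arrow (x - r) (x - r).-1.
Proof.
rewrite /wpath; case: ifP => // xz zx.
have -> : x = z by apply/eqP; rewrite eqn_leq xz zx.
by rewrite subnn !big_geq.
Qed.

Definition toward (x z : nat) : nat := if (x < z)%N then x.+1 else x.-1.

Lemma vtx_toward x z : vtx x -> vtx z -> x != z -> vtx (toward x z).
Proof. by rewrite /Defs.vtx /toward; case: (ltnP x z); lia. Qed.

Lemma wpath_step x z : vtx x -> vtx z -> x != z ->
  W x z = arrow x (toward x z) * W (toward x z) z.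
Proof.
move=> vx vz xz; have := vtx_toward vx vz xz; rewrite /toward.
case: (ltnP x z) => hxz vy; have [ay ya] := arrow_corner vx vy.
  rewrite wpath_upE ?(ltnW hxz) // wpath_upE // (_ : z - x = (z - x.+1).+1)%N; last by lia.
  rewrite big_nat_recl // addn0 !ev_vtx // mulrA ay -{1}ya -mulrA.
  by congr (_ * (_ * _)); apply: eq_bigr => r _; rewrite addnS addSn.
rewrite !wpath_downE //; last by lia.
rewrite (_ : x - z = (x.-1 - z).+1)%N; last by lia.
rewrite big_nat_recl // subn0 !ev_vtx // mulrA ay -{1}ya -mulrA.
by congr (_ * (_ * _)); apply: eq_bigr => r _; rewrite (_ : x - r.+1 = x.-1 - r)%N //; lia.
Qed.

Lemma wpath_comp x y z : vtx x -> vtx z -> ((x <= y <= z) || (z <= y <= x))%N ->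
  W x y * W y z = W x z.
Proof.
move=> vx vz hy; move Hd : (x - y + (y - x))%N => d.
elim: d x vx hy Hd => [|d IH] x vx hy Hd.
  have -> : x = y by lia.
  by rewrite wpath_id ev_wpath.
have xy : x != y by apply/eqP; lia.
have xz : x != z by apply/eqP; lia.
have vy : vtx y by move: vx vz; rewrite /Defs.vtx; lia.
rewrite (wpath_step vx vy xy) (wpath_step vx vz xz) (_ : toward x z = toward x y); last first.
  by rewrite /toward; case: (ltnP x z); case: (ltnP x y); lia.
rewrite -mulrA IH //; first exact: vtx_toward.
all: by rewrite /toward; case: (ltnP x y); lia.
Qed.

Lemma wpath_ev x z : vtx x -> vtx z -> W x z * ev z = W x z.
Proof. by move=> vx vz; rewrite -wpath_id wpath_comp // leqnn andbT leq_total. Qed.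

Lemma fmapE x z : vtx x -> vtx z -> fmap n src tgt e a x z = W x z.
Proof. by move=> vx vz; rewrite /fmap ev_wpath wpath_ev. Qed.

Lemma wpath_radpow x z : vtx x -> vtx z -> x != z -> W x z \in radpow 1.
Proof.
move=> vx vz xz; have <- : ev x * W x z * ev z = W x z by rewrite ev_wpath wpath_ev.
exact: offcorner_radpow.
Qed.

(** * Two-term complexes up to homotopy *)

Section Homotopy.
Local Notation hom := (hommx n e).

Lemma hommx_evl p q (v : 'I_p -> nat) (u : 'I_q -> nat) M r s :
  hom v u M -> ev (v r) * M r s = M r s.
Proof. by move=> hM; rewrite (hM r s) !mulrA ev_idem. Qed.

Lemma hommx_evr p q (v : 'I_p -> nat) (u : 'I_q -> nat) M r s :
  hom v u M -> M r s * ev (u s) = M r s.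
Proof. by move=> hM; rewrite (hM r s) -!mulrA ev_idem. Qed.

Lemma hommx_mul p q l (w : 'I_p -> nat) (v : 'I_q -> nat) (u : 'I_l -> nat) M M' :
  hom w v M -> hom v u M' -> hom w u (M *m M').
Proof.
move=> hM hM' r s; rewrite !mxE mulr_sumr mulr_suml; apply: eq_bigr => j _.
by rewrite mulrA (hommx_evl _ _ hM) -mulrA (hommx_evr _ _ hM').
Qed.

Lemma hommxD p q (v : 'I_p -> nat) (u : 'I_q -> nat) M M' :
  hom v u M -> hom v u M' -> hom v u (M + M').
Proof. by move=> hM hM' r s; rewrite !mxE mulrDr mulrDl -hM -hM'. Qed.

Lemma hommxN p q (v : 'I_p -> nat) (u : 'I_q -> nat) M : hom v u M -> hom v u (- M).
Proof. by move=> hM r s; rewrite !mxE mulrN mulNr -hM. Qed.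

Lemma hommx_idmx q (u : 'I_q -> nat) : hom u u (idmx n e u).
Proof.
by move=> r s; rewrite !mxE; case: eqP => [->|_]; rewrite ?ev_idem ?mulr0 ?mul0r.
Qed.

Lemma idmx_mulmx p q (v : 'I_p -> nat) (u : 'I_q -> nat) M :
  hom v u M -> idmx n e v *m M = M.
Proof.
move=> hM; apply/matrixP => r s; rewrite !mxE (bigD1 r) //= big1 ?addr0.
  by rewrite mxE eqxx (hommx_evl _ _ hM).
by move=> j /negbTE nj; rewrite mxE eq_sym nj mul0r.
Qed.

Lemma mulmx_idmx p q (v : 'I_p -> nat) (u : 'I_q -> nat) M :
  hom v u M -> M *m idmx n e u = M.
Proof.
move=> hM; apply/matrixP => r s; rewrite !mxE (bigD1 s) //= big1 ?addr0.
  by rewrite mxE eqxx (hommx_evr _ _ hM).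
by move=> j /negbTE nj; rewrite mxE nj mulr0.
Qed.

Definition mxradpow p q m (M : 'M[A]_(p, q)) := forall i j, M i j \in radpow m.

Lemma mxradpow_mul p q l i j (M : 'M[A]_(p, q)) (M' : 'M[A]_(q, l)) :
  mxradpow i M -> mxradpow j M' -> mxradpow (i + j) (M *m M').
Proof. by move=> hM hM' r s; rewrite mxE memv_suml // => t _; apply: radpow_mul. Qed.

Lemma idmx_sub_quasi_idem q (w : 'I_q -> nat) M : hommx n e w w M ->
  (idmx n e w - M) *m (idmx n e w - M) - (idmx n e w - M) = M *m M - M.
Proof.
move=> hM; rewrite mulmxBl !mulmxBr (idmx_mulmx (hommx_idmx w)) (idmx_mulmx hM).
by rewrite (mulmx_idmx hM) addrAC subrr add0r opprB.
Qed.

Variables (p q : nat) (v : 'I_p -> nat) (u : 'I_q -> nat) (D : 'M[A]_(p, q)).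
Local Notation nullhomotopic := (null_homotopic n e v u D).
Local Notation chain_endo := (chain_endo n e v u D).

Lemma nullhomotopicD F1 F0 G1 G0 :
  nullhomotopic F1 F0 -> nullhomotopic G1 G0 -> nullhomotopic (F1 + G1) (F0 + G0).
Proof.
move=> [H [hH -> ->]] [H' [hH' -> ->]]; exists (H + H').
by split; [exact: hommxD | rewrite mulmxDl | rewrite mulmxDr].
Qed.

Lemma nullhomotopicN F1 F0 : nullhomotopic F1 F0 -> nullhomotopic (- F1) (- F0).
Proof.
move=> [H [hH -> ->]]; exists (- H).
by split; [exact: hommxN | rewrite mulNmx | rewrite mulmxN].
Qed.

Lemma nullhomotopic_mull E1 E0 F1 F0 :
  chain_endo E1 E0 -> nullhomotopic F1 F0 -> nullhomotopic (E1 *m F1) (E0 *m F0).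
Proof.
move=> [h1 h0 hE] [H [hH -> ->]]; exists (E1 *m H).
by split; [exact: hommx_mul hH | rewrite mulmxA | rewrite !mulmxA hE].
Qed.

Lemma chain_endoD F1 F0 G1 G0 :
  chain_endo F1 F0 -> chain_endo G1 G0 -> chain_endo (F1 + G1) (F0 + G0).
Proof.
move=> [f1 f0 fD] [g1 g0 gD].
by split; [exact: hommxD | exact: hommxD | rewrite mulmxDr mulmxDl fD gD].
Qed.

Lemma chain_endoN F1 F0 : chain_endo F1 F0 -> chain_endo (- F1) (- F0).
Proof.
move=> [f1 f0 fD].
by split; [exact: hommxN | exact: hommxN | rewrite mulmxN mulNmx fD].
Qed.

Lemma chain_endo_idmx : hom v u D -> chain_endo (idmx n e u) (idmx n e v).
Proof.
move=> hD; split; try exact: hommx_idmx.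
by rewrite (mulmx_idmx hD) (idmx_mulmx hD).
Qed.

(* F is homotopic to F^(t+1), whose entries lie in R^(t+1), for every t. *)
Lemma nullhomotopic_rad_quasi_idem F1 F0 : chain_endo F1 F0 ->
  mxradpow 1 F1 -> mxradpow 1 F0 ->
  nullhomotopic (F1 *m F1 - F1) (F0 *m F0 - F0) -> nullhomotopic F1 F0.
Proof.
move=> hF r1 r0 hid.
have key t : [/\ nullhomotopic (F1 - iter t (mulmx F1) F1) (F0 - iter t (mulmx F0) F0),
    mxradpow t.+1 (iter t (mulmx F1) F1) & mxradpow t.+1 (iter t (mulmx F0) F0)].
  elim: t => [|t [IH i1 i0]].
    rewrite /= !subrr; split => //; exists 0.
    by split; rewrite ?mul0mx ?mulmx0 // => r s; rewrite !mxE mulr0 mul0r.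
  split; [|exact: (mxradpow_mul r1 i1)|exact: (mxradpow_mul r0 i0)].
  have split_pow l (M P : 'M[A]_l) : M - M *m P = - (M *m M - M) + M *m (M - P).
    by rewrite mulmxBr opprB addrA subrK.
  rewrite /= !split_pow; apply: nullhomotopicD; first exact: nullhomotopicN.
  exact: nullhomotopic_mull.
have [hN zN1 zN0] := key N.
have iterN0 l (M : 'M[A]_l) : mxradpow N.+1 M -> M = 0.
  by move=> hM; apply/matrixP => i j; rewrite mxE (radpow_eq0 (leqnSn N) (hM i j)).
by rewrite (iterN0 _ _ zN1) (iterN0 _ _ zN0) !subr0 in hN.
Qed.

End Homotopy.

(* Holds for every c at the zero summands P_0 = P_(n+1) = 0. *)
Definition scalar_at l (w : 'I_l -> nat) (M : 'M[A]_l) j (c : k) :=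
  M j j - c *: ev (w j) \in radpow 1.

Section ScalarModRad.
Variables (l : nat) (w : 'I_l -> nat).

Lemma scalar_at_exists M j : hommx n e w w M -> exists c, scalar_at w M j c.
Proof.
by move=> hM; have [c hc] := corner_scalar (w j) (M j j); exists c; rewrite /scalar_at (hM j j).
Qed.

Lemma scalar_at_uniq M j c d : vtx (w j) -> e (w j) != 0 ->
  scalar_at w M j c -> scalar_at w M j d -> c = d.
Proof. by rewrite /scalar_at => vj nj; rewrite !ev_vtx //; exact: scalar_mod_radpow_uniq. Qed.

Lemma scalar_atB M M' j c d :
  scalar_at w M j c -> scalar_at w M' j d -> scalar_at w (M - M') j (c - d).
Proof.
move=> hc hd; rewrite /scalar_at !mxE scalerBl.
set x := M j j; set y := M' j j; set c' := c *: _; set d' := d *: _.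
have -> : x - y - (c' - d') = x - c' - (y - d').
  by rewrite !opprB addrACA [in RHS]addrACA [- y + _]addrC.
exact: memvB.
Qed.

Lemma scalar_at_idmx j : scalar_at w (idmx n e w) j 1.
Proof. by rewrite /scalar_at mxE eqxx scale1r subrr mem0v. Qed.

Lemma scalar_at_sq M j c : hommx n e w w M -> injective w ->
  scalar_at w M j c -> scalar_at w (M *m M) j (c * c).
Proof.
rewrite /scalar_at => hM winj hc; rewrite mxE (bigD1 j) //= addrAC; apply: memvD.
  have [p hp ->] : exists2 p, p \in radpow 1 & M j j = p + c *: ev (w j).
    by exists (M j j - c *: ev (w j)); rewrite ?subrK.
  rewrite mulrDl !mulrDr -!scalerAl -!scalerAr ev_idem scalerA addrA addrK.
  apply: memvD; first apply: memvD.
  - by apply: radpow_mulr.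
  - by apply: memvZ; apply: radpow_mulr.
  - by apply: memvZ; apply: radpow_mull.
apply: memv_suml => t tj; apply: radpow_mulr => //.
by rewrite (hM j t) offcorner_radpow // (inj_eq winj) eq_sym.
Qed.

Lemma mxradpow_of_scalar0 M : hommx n e w w M -> injective w ->
  (forall j, scalar_at w M j 0) -> mxradpow 1 M.
Proof.
move=> hM winj h0 i j; have [<-|ij] := eqVneq i j.
  by have := h0 i; rewrite /scalar_at scale0r subr0.
by rewrite (hM i j) offcorner_radpow // (inj_eq winj).
Qed.

End ScalarModRad.

(** * Corner spaces under condition (C) *)

Definition rmultiple (x y : A) := exists mu, y = x * mu.

Lemma rmultipleD x y z : rmultiple x y -> rmultiple x z -> rmultiple x (y + z).
Proof. by move=> [mu ->] [nu ->]; exists (mu + nu); rewrite mulrDr. Qed.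

Lemma rmultipleZ x c y : rmultiple x y -> rmultiple x (c *: y).
Proof. by move=> [mu ->]; exists (c *: mu); rewrite scalerAr. Qed.

Definition eset (S : pred nat) : A := \sum_(1 <= i < n.+1 | S i) e i.

Lemma e_eset S j : vtx j -> e j * eset S = if S j then e j else 0.
Proof.
move=> vj; rewrite /eset mulr_sumr big_nat_cond.
rewrite (eq_bigr (fun i => if i == j then e j else 0)); last first.
  move=> i /andP [hi _]; have vi : vtx i by rewrite /Defs.vtx; lia.
  by rewrite mul_e // eq_sym.
rewrite -big_nat_cond -big_mkcondr big_nat1_cond_eq.
by move: vj; rewrite /Defs.vtx => ->.
Qed.

Lemma eset_e S j : vtx j -> eset S * e j = if S j then e j else 0.
Proof.
move=> vj; rewrite /eset mulr_suml big_nat_cond.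
rewrite (eq_bigr (fun i => if i == j then e j else 0)); last first.
  move=> i /andP [hi _]; have vi : vtx i by rewrite /Defs.vtx; lia.
  by rewrite mul_e //; case: eqP => [->|].
rewrite -big_nat_cond -big_mkcondr big_nat1_cond_eq.
by move: vj; rewrite /Defs.vtx => ->.
Qed.

Lemma eset_split S : eset S + eset (predC S) = 1.
Proof. by rewrite /eset -sum_e [RHS](bigID S). Qed.

Lemma eset_orth S : eset S * eset (predC S) = 0.
Proof.
rewrite {1}/eset mulr_suml big_nat_cond big1 // => i /andP [hi Si].
by rewrite e_eset /= ?Si //; rewrite /Defs.vtx; lia.
Qed.

Lemma eset_arrow_eset S y :
  eset S * a y * eset (predC S) = if S (src y) && ~~ S (tgt y) then a y else 0.
Proof.
have [vs vt] := vtx_arrow y.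
rewrite {1}arrowE !mulrA eset_e // -!mulrA e_eset //=.
by case: (S (src y)); case: (S (tgt y)); rewrite /= ?mul0r ?mulr0 // mulrA -arrowE.
Qed.

Definition rad_multiple (x y : A) := exists2 q, q \in radpow 1 & y = x * q.

Lemma rad_multiple0 x : rad_multiple x 0.
Proof. by exists 0; rewrite ?mem0v ?mulr0. Qed.

Lemma rad_multipleD x y z :
  rad_multiple x y -> rad_multiple x z -> rad_multiple x (y + z).
Proof. by move=> [q hq ->] [q' hq' ->]; exists (q + q'); [exact: memvD | rewrite mulrDr]. Qed.

Lemma rad_multipleN x y : rad_multiple x y -> rad_multiple x (- y).
Proof. by move=> [q hq ->]; exists (- q); [rewrite memvN | rewrite mulrN]. Qed.

Lemma rad_multiple_mulr x y l : rad_multiple x y -> rad_multiple x (y * l).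
Proof. by move=> [q hq ->]; exists (q * l); [exact: radpow_mulr | rewrite mulrA]. Qed.

Lemma rad_multiple_sum x (I : finType) (P : pred I) (F : I -> A) :
  (forall i, P i -> rad_multiple x (F i)) -> rad_multiple x (\sum_(i | P i) F i).
Proof. by move=> hF; elim/big_ind: _ => //; [exact: rad_multiple0 | exact: rad_multipleD]. Qed.

Lemma rad_multiple_trans x y z t :
  rad_multiple x (y - z) -> rad_multiple x (z - t) -> rad_multiple x (y - t).
Proof. by move=> h h'; have := rad_multipleD h h'; rewrite subrKA. Qed.

Section CornerIdeals.
Hypothesis arrow_adj : forall x, src x <> tgt x ->
  tgt x = (src x).+1 \/ src x = (tgt x).+1.
Hypothesis arrow_unique : forall i, (1 <= i < n)%N ->
  #|[pred x | (src x == i) && (tgt x == i.+1)]| = 1%N /\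
  #|[pred x | (src x == i.+1) && (tgt x == i)]| = 1%N.
Hypothesis arrow_ideal : forall x, src x <> tgt x -> forall y : A,
  ((exists l, y = a x * l * e (tgt x)) <-> (exists l, y = e (src x) * l * e (tgt x))) /\
  ((exists l, y = e (src x) * l * e (tgt x)) <-> (exists l, y = e (src x) * l * a x)).

Section CutArrow.
Variables (S : pred nat) (x0 : Arr).
Hypotheses (S_src : S (src x0)) (x0_nonloop : src x0 <> tgt x0).
Hypothesis x0_unique : forall y, S (src y) -> ~~ S (tgt y) -> y = x0.

(* A path from S to its complement passes through x0, and by (C)(b) the part
   of it before x0 can be moved behind x0. *)
Lemma cut_path (p : seq Arr) l :
  rmultiple (a x0) (e (src x0) * l * eset S * pathv a p * eset (predC S)).
Proof.
elim: p l => [|y p IH] l.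
  by exists 0; rewrite /pathv big_nil mulr1 -mulrA eset_orth !mulr0.
have -> : e (src x0) * l * eset S * pathv a (y :: p) * eset (predC S) =
    e (src x0) * (l * eset S * a y) * eset S * pathv a p * eset (predC S) +
    e (src x0) * l * (eset S * a y * eset (predC S)) * pathv a p * eset (predC S).
  have ay : a y = a y * (eset S + eset (predC S)) by rewrite eset_split mulr1.
  by rewrite pathv_cons {1}ay !(mulrDl, mulrDr) !mulrA.
apply: rmultipleD; first exact: IH.
rewrite eset_arrow_eset; case: ifP => [/andP [Ss Nt]|_]; last first.
  by exists 0; rewrite !mulr0 !mul0r.
rewrite (x0_unique Ss Nt).
have [l' ->] : exists l', e (src x0) * l * a x0 = a x0 * l' * e (tgt x0).
  apply/(proj1 (arrow_ideal x0_nonloop _)); exists (l * a x0).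
  by rewrite -!mulrA arrow_e ?eqxx //; case: (vtx_arrow x0).
by exists (l' * e (tgt x0) * pathv a p * eset (predC S)); rewrite !mulrA.
Qed.

Lemma cut_corner z lam : vtx z -> ~~ S z -> rmultiple (a x0) (e (src x0) * lam * e z).
Proof.
move=> vz Sz; have [vs _] := vtx_arrow x0.
elim/algebra_ind: lam => [|u w hu hw|c u hu|j vj|p _].
- by exists 0; rewrite !mulr0 !mul0r.
- by rewrite mulrDr mulrDl; apply: rmultipleD.
- by rewrite -scalerAr -scalerAl; apply: rmultipleZ.
- exists 0; rewrite mulr0; have [<-|ne] := eqVneq (src x0) j; last by rewrite e_orth // mul0r.
  by rewrite e_idem // e_orth //; apply: contraNneq Sz => <-.
have [mu hmu] := cut_path p 1; rewrite mulr1 e_eset // S_src in hmu.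
by exists (mu * e z); rewrite mulrA -hmu -[RHS]mulrA eset_e //= Sz.
Qed.

End CutArrow.

Lemma card1_arrow i j : #|[pred x | (src x == i) && (tgt x == j)]| = 1%N ->
  exists2 x0, [/\ src x0 = i, tgt x0 = j & arrow i j = a x0] &
    forall y, src y = i -> tgt y = j -> y = x0.
Proof.
move=> /eqP /card1P [x0 hx0].
have /andP [/eqP s0 /eqP t0] : (src x0 == i) && (tgt x0 == j) by have := hx0 x0; rewrite !inE eqxx.
have x0_unique y : src y = i -> tgt y = j -> y = x0.
  by move=> sy ty; have := hx0 y; rewrite !inE sy ty !eqxx => /esym /eqP.
exists x0 => //; split => //; rewrite /Defs.arr; case: pickP => [y /andP [/eqP sy /eqP ty]|none] /=.
  by rewrite (x0_unique y).
by have := none x0; rewrite s0 t0 !eqxx.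
Qed.

Lemma corner_cut_arrow (S : pred nat) x y z lam : vtx z -> ~~ S z -> S x -> ~~ S y ->
  #|[pred x' | (src x' == x) && (tgt x' == y)]| = 1%N ->
  (forall y', src y' <> tgt y' -> S (src y') -> ~~ S (tgt y') -> src y' = x /\ tgt y' = y) ->
  rmultiple (arrow x y) (e x * lam * e z).
Proof.
move=> vz Sz Sx Sy /card1_arrow [x0 [s0 t0 ->] x0_unique] leaving.
rewrite -s0; apply: (cut_corner (S := S)) => //; first by rewrite s0.
  by rewrite s0 t0 => xy; rewrite -xy Sx in Sy.
move=> y' Ss Nt; have [eq|ne] := eqVneq (src y') (tgt y'); first by rewrite -eq Ss in Nt.
by have [] := leaving y' (elimN eqP ne) Ss Nt; apply: x0_unique.
Qed.

Lemma corner_step x z lam : vtx x -> vtx z -> x != z ->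
  rmultiple (arrow x (toward x z)) (e x * lam * e z).
Proof.
move=> vx vz xz; have [hx hz] : (1 <= x <= n)%N /\ (1 <= z <= n)%N by [].
rewrite /toward; case: (ltnP x z) => hxz.
  apply: (corner_cut_arrow (S := fun i => (i <= x)%N)) => //=; rewrite -?ltnNge //.
  - by apply: (proj1 (arrow_unique _)); lia.
  - by move=> y ne sy ty; case: (arrow_adj ne); lia.
apply: (corner_cut_arrow (S := fun i => (x <= i)%N)) => //=; rewrite -?ltnNge //; try lia.
- by have := proj2 (arrow_unique (i := x.-1) _); rewrite prednK; [apply; lia | lia].
- by move=> y ne sy ty; case: (arrow_adj ne); lia.
Qed.

Lemma corner_wpath x z lam : vtx x -> vtx z -> rmultiple (W x z) (e x * lam * e z).
Proof.
move=> vx vz; move Hd : (x - z + (z - x))%N => d.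
elim: d x lam vx Hd => [|d IH] x lam vx Hd.
  have -> : z = x by lia.
  by exists (lam * e x); rewrite wpath_id ev_vtx // mulrA.
have xz : x != z by apply/eqP; lia.
have vy := vtx_toward vx vz xz; have [mu hmu] := corner_step lam vx vz xz.
have [|nu hnu] := IH _ mu vy; first by rewrite /toward; case: (ltnP x z); lia.
exists nu; rewrite (wpath_step vx vz xz) -[RHS]mulrA -hnu !mulrA (proj2 (arrow_corner vx vy)).
by rewrite -hmu -[RHS]mulrA e_idem.
Qed.

Section NonzeroPaths.
Hypothesis wpath_neq0 : forall i j, vtx i -> vtx j -> W i j != 0.

Lemma e_neq0 j : vtx j -> e j != 0.
Proof. by move=> vj; have := wpath_neq0 vj vj; rewrite wpath_id ev_vtx. Qed.

(* e_b r w lies in e_b Λ e_c = w Λ, and the scalar part of the cofactor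
   vanishes by Nakayama. *)
Lemma rad_multiple_wpath b c r : vtx b -> vtx c -> b != c -> r \in radpow 1 ->
  rad_multiple (W b c) (e b * r * W b c).
Proof.
move=> vb vc bc hr; have wE : W b c * e c = W b c by rewrite -(ev_vtx vc) wpath_ev.
have [mu hmu] := corner_wpath (r * W b c) vb vc.
have E1 : e b * r * W b c = W b c * (e c * mu * e c).
  have E0 : e b * r * W b c = W b c * mu by rewrite -hmu -!mulrA wE.
  by rewrite !mulrA wE -E0 -[RHS]mulrA wE.
have [d hd] := corner_scalar c mu; rewrite ev_vtx // in hd.
have E2 : e b * r * W b c = d *: W b c + W b c * (e c * mu * e c - d *: e c).
  by rewrite E1 mulrBr -scalerAr wE addrC subrK.
have d0 : d = 0.
  apply: (nakayama_scalar (w := W b c) (r := e b * r) (q := - (e c * mu * e c - d *: e c))).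
  - exact: wpath_radpow.
  - exact: wpath_neq0.
  - by apply: radpow_mull.
  - by rewrite memvN.
  by rewrite E2 mulrN addrK.
by exists (e c * mu * e c - d *: e c); rewrite // E2 d0 scale0r add0r.
Qed.

Definition between (x y z : nat) : bool := ((x < y < z) || (z < y < x))%N.

Lemma detour_wpathl b c z y : vtx b -> vtx c -> vtx z -> between c b z ->
  y = e z * y * e c -> rad_multiple (W b c) (W b z * y).
Proof.
move=> vb vc vz hb ->; have [mu ->] := corner_wpath y vz vc.
rewrite -(wpath_comp (y := b) vz vc); last by move: hb; rewrite /between; lia.
rewrite !mulrA; apply: rad_multiple_mulr.
rewrite -[W b z]ev_wpath ev_vtx // -(mulrA (e b)).
apply: rad_multiple_wpath => //; first by move: hb; rewrite /between; lia.
by apply: radpow_mulr => //; apply: wpath_radpow => //; move: hb; rewrite /between; lia.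
Qed.

Lemma detour_wpathr b c z y : vtx b -> vtx c -> vtx z -> between z c b ->
  y = e b * y * e z -> rad_multiple (W b c) (y * W z c).
Proof.
move=> vb vc vz hc ->; have [mu ->] := corner_wpath y vb vz.
rewrite -(wpath_comp (y := c) vb vz); last by move: hc; rewrite /between; lia.
exists (W c z * mu * W z c); last by rewrite !mulrA.
do 2![apply: radpow_mulr => //]; apply: wpath_radpow => //.
by move: hc; rewrite /between; lia.
Qed.

(** * The complexes X_i *)

Section TwoTermComplex.
Variable ii : seq nat.
Hypothesis ii_Xi : inXi n ii.

Local Notation m := (mXi ii).
Local Notation u := (@Xi_deg1 ii).
Local Notation v := (@Xi_deg0 ii).
Local Notation D := (Xi_diff n src tgt e a ii).
(* lab t is i_t, so that u s = i_(2s) and v r = i_(2r+1). *)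
Local Notation lab := (nth 0%N ii).

Lemma size_Xi : size ii = (2 * m).+1.
Proof.
case/and5P: ii_Xi => _ _ odd_ii _ _; have := odd_double_half (size ii).
by rewrite odd_ii /mXi -mul2n; lia.
Qed.

Lemma Xi_label_lt i j : (i < j)%N -> (j < size ii)%N -> (lab i < lab j)%N.
Proof.
move=> ij js; case/and5P: ii_Xi => sorted_ii _ _ _ _.
by apply: (sorted_ltn_nth ltn_trans 0 sorted_ii) => //; rewrite inE; lia.
Qed.

Lemma Xi_label_le i : (i < size ii)%N -> (lab i <= n.+1)%N.
Proof. by move=> hi; case/and5P: ii_Xi => _ /allP -> //; rewrite mem_nth. Qed.

Lemma Xi_label_eq i j : (i < size ii)%N -> (j < size ii)%N -> lab i = lab j -> i = j.
Proof.
case/and5P: ii_Xi => sorted_ii _ _ _ _ hi hj /eqP.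
have uniq_ii := sorted_uniq ltn_trans ltnn sorted_ii.
by rewrite nth_uniq // => /eqP.
Qed.

Lemma Xi_label_vtx i : (0 < i < 2 * m)%N -> vtx (lab i).
Proof.
move=> hi; have sz := size_Xi.
have := Xi_label_lt (i := i.-1) (j := i); have := Xi_label_lt (i := i) (j := i.+1).
have := Xi_label_le (i := i.+1); rewrite /Defs.vtx; lia.
Qed.

Lemma vtx_Xi_deg0 (r : 'I_m) : vtx (v r).
Proof. by apply: Xi_label_vtx; have := ltn_ord r; lia. Qed.

Lemma vtx_Xi_deg1 (s : 'I_m.+1) : (0 < s < m)%N -> vtx (u s).
Proof. by move=> hs; apply: Xi_label_vtx; lia. Qed.

Lemma vtx_Xi_single : m = 0%N -> vtx (u ord0).
Proof.
move=> m0; have sz : size ii = 1%N by rewrite size_Xi m0.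
have := Xi_label_le (i := 0); rewrite sz => /(_ isT).
have ii1 : ii = [:: lab 0] by move: sz; case: (ii) => [|x []].
case/and5P: ii_Xi => _ _ _; rewrite /Xi_deg1 /= muln0 /Defs.vtx {}ii1 /=.
by rewrite !eqseq_cons !andbT; lia.
Qed.

Lemma Xi_deg1_inj : injective u.
Proof.
move=> s t st; apply: ord_inj; have [hs ht] := (ltn_ord s, ltn_ord t).
by have := Xi_label_eq _ _ st; rewrite size_Xi; lia.
Qed.

Lemma Xi_deg0_inj : injective v.
Proof.
move=> s t st; apply: ord_inj; have [hs ht] := (ltn_ord s, ltn_ord t).
by have := Xi_label_eq _ _ st; rewrite size_Xi; lia.
Qed.

Lemma Xi_deg01_neq s r : u s != v r.
Proof.
apply/eqP => sr; have [hs hr] := (ltn_ord s, ltn_ord r).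
by have := Xi_label_eq _ _ sr; rewrite size_Xi; lia.
Qed.

Lemma Xi_label_between i j l : between i j l -> (i < size ii)%N -> (l < size ii)%N ->
  between (lab i) (lab j) (lab l).
Proof.
rewrite /between => /orP [/andP [ij jl] | /andP [lj ji]] hi hl; apply/orP.
  by left; apply/andP; split; apply: Xi_label_lt; lia.
by right; apply/andP; split; apply: Xi_label_lt; lia.
Qed.

Definition adjacent (r s : nat) : bool := (s == r) || (s == r.+1).

Lemma Xi_diffE r s : D r s = if adjacent r s then fmap n src tgt e a (v r) (u s) else 0.
Proof. by rewrite /Xi_diff mxE /adjacent; case: (_ == r :> nat); case: (_ == r.+1 :> nat). Qed.

Lemma hommx_Xi_diff : hommx n e v u D.
Proof.
move=> r s; rewrite Xi_diffE; case: ifP => _; rewrite ?mulr0 ?mul0r //.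
by rewrite /fmap !mulrA ev_idem -(mulrA _ (ev (u s))) ev_idem.
Qed.

Lemma Xi_diff_row F1 (r : 'I_m) (s : 'I_m.+1) :
  hommx n e u u F1 -> adjacent r s -> vtx (u s) ->
  rad_multiple (W (v r) (u s)) ((D *m F1) r s - W (v r) (u s) * F1 s s).
Proof.
move=> h1 rs vs; rewrite mxE (bigD1 s) //= Xi_diffE rs fmapE ?vtx_Xi_deg0 // addrC addrK.
apply: rad_multiple_sum => j js; rewrite Xi_diffE.
case: ifP => rj; last by rewrite mul0r; exact: rad_multiple0.
have [vj|nvj] := boolP (vtx (u j)); last first.
  by rewrite /fmap (ev_nvtx nvj) mulr0 mul0r; exact: rad_multiple0.
rewrite fmapE ?vtx_Xi_deg0 //; apply: detour_wpathl => //; first exact: vtx_Xi_deg0.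
  have [[hs hj] hr] := (ltn_ord s, ltn_ord j, ltn_ord r).
  move: rs rj js; rewrite /adjacent -(inj_eq val_inj) /= => rs rj js.
  by rewrite /Xi_deg0 /Xi_deg1; apply: Xi_label_between; rewrite ?size_Xi /between; lia.
by rewrite -!ev_vtx // -(h1 j s).
Qed.

Lemma Xi_diff_col F0 (r : 'I_m) (s : 'I_m.+1) :
  hommx n e v v F0 -> adjacent r s -> vtx (u s) ->
  rad_multiple (W (v r) (u s)) ((F0 *m D) r s - F0 r r * W (v r) (u s)).
Proof.
move=> h0 rs vs; rewrite mxE (bigD1 r) //= Xi_diffE rs fmapE ?vtx_Xi_deg0 // addrC addrK.
apply: rad_multiple_sum => i ir; rewrite Xi_diffE.
case: ifP => si; last by rewrite mulr0; exact: rad_multiple0.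
rewrite fmapE ?vtx_Xi_deg0 //; apply: detour_wpathr => //; try exact: vtx_Xi_deg0.
  have [[hs hi] hr] := (ltn_ord s, ltn_ord i, ltn_ord r).
  move: rs si ir; rewrite /adjacent -(inj_eq val_inj) /= => rs si ir.
  by rewrite /Xi_deg0 /Xi_deg1; apply: Xi_label_between; rewrite ?size_Xi /between; lia.
by rewrite -!ev_vtx ?vtx_Xi_deg0 // -(h0 r i).
Qed.

(* Compare (D F1)_rs = (F0 D)_rs modulo w R, where w = D_rs = w^(v r)_(u s). *)
Lemma Xi_scalar_adjacent F1 F0 (r : 'I_m) (s : 'I_m.+1) lam mu :
  chain_endo n e v u D F1 F0 -> adjacent r s -> vtx (u s) ->
  scalar_at u F1 s lam -> scalar_at v F0 r mu -> lam = mu.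
Proof.
move=> [h1 h0 hD] rs vs hl hm; have vr := vtx_Xi_deg0 r.
have rs_ne : v r != u s by rewrite eq_sym Xi_deg01_neq.
have lam_w : rad_multiple (W (v r) (u s)) (lam *: W (v r) (u s) - W (v r) (u s) * F1 s s).
  exists (- (F1 s s - lam *: ev (u s))); first by rewrite memvN.
  by rewrite mulrN mulrBr -scalerAr wpath_ev // opprB.
have row : rad_multiple (W (v r) (u s)) (W (v r) (u s) * F1 s s - (F0 *m D) r s).
  by rewrite -opprB -hD; apply/rad_multipleN/Xi_diff_row.
have mu_w : rad_multiple (W (v r) (u s)) (F0 r r * W (v r) (u s) - mu *: W (v r) (u s)).
  have := rad_multiple_wpath vr vs rs_ne hm.
  rewrite -(ev_vtx vr) mulrBr -scalerAr ev_idem (hommx_evl _ _ h0) mulrBl -scalerAl.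
  by rewrite ev_wpath.
have [q hq Eq] : rad_multiple (W (v r) (u s)) ((lam - mu) *: W (v r) (u s)).
  rewrite scalerBl; apply: (rad_multiple_trans _ mu_w).
  exact: (rad_multiple_trans (rad_multiple_trans lam_w row) (Xi_diff_col h0 rs vs)).
apply/eqP; rewrite -subr_eq0; apply/eqP.
apply: (nakayama_scalar (w := W (v r) (u s)) (r := 0) (q := q)) => //.
- exact: wpath_radpow.
- exact: wpath_neq0.
- exact: mem0v.
- by rewrite mul0r add0r.
Qed.

Definition scalar_endo F1 F0 c :=
  (forall s, scalar_at u F1 s c) /\ (forall r, scalar_at v F0 r c).

Lemma scalar_endo_deg0 F1 F0 c (r0 : 'I_m) : chain_endo n e v u D F1 F0 ->
  r0 = 0%N :> nat -> scalar_at v F0 r0 c -> forall r, scalar_at v F0 r c.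
Proof.
move=> hF r00 hc [t ht]; have [h1 h0 _] := hF.
elim: t ht => [|t IH] ht; first by rewrite (_ : Ordinal ht = r0) //; apply: val_inj.
have ht' : (t < m)%N by lia.
have hs : (t.+1 < m.+1)%N by lia.
have vs : vtx (u (Ordinal hs)) by apply: vtx_Xi_deg1 => /=; lia.
have [c' hc'] := scalar_at_exists (Ordinal hs) h1.
have [d hd] := scalar_at_exists (Ordinal ht) h0.
have c'c : c' = c.
  by apply: (Xi_scalar_adjacent hF _ vs hc' (IH ht')); rewrite /adjacent eqxx orbT.
have c'd : c' = d by apply: (Xi_scalar_adjacent hF _ vs hc' hd); rewrite /adjacent eqxx.
by rewrite -c'c c'd.
Qed.

Lemma scalar_endo_exists F1 F0 : chain_endo n e v u D F1 F0 ->
  exists c, scalar_endo F1 F0 c.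
Proof.
move=> hF; have [h1 h0 _] := hF; have [m0|m_gt0] := posnP m.
  have [c hc] := scalar_at_exists ord0 h1; exists c.
  split => [s|[r hr]]; last by exfalso; move: hr; rewrite m0.
  by rewrite (_ : s = ord0) //; apply: val_inj => /=; move: (ltn_ord s); lia.
have [c hc] := scalar_at_exists (Ordinal m_gt0) h0.
have deg0 := scalar_endo_deg0 (r0 := Ordinal m_gt0) hF erefl hc.
exists c; split => // s; have [vs|nvs] := boolP (vtx (u s)); last first.
  by rewrite /scalar_at (h1 s s) (ev_nvtx nvs) !mulr0 scaler0 subr0 mem0v.
have hr : (minn s m.-1 < m)%N by lia.
have [c' hc'] := scalar_at_exists s h1.
rewrite (_ : c = c') //; symmetry; apply: (Xi_scalar_adjacent hF _ vs hc' (deg0 (Ordinal hr))).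
by rewrite /adjacent /=; move: (ltn_ord s); lia.
Qed.

Lemma scalar_endo_uniq F1 F0 c d : scalar_endo F1 F0 c -> scalar_endo F1 F0 d -> c = d.
Proof.
move=> [c1 c0] [d1 d0]; have [m0|m_gt0] := posnP m.
  have vu := vtx_Xi_single m0.
  exact: (scalar_at_uniq vu (e_neq0 vu) (c1 ord0) (d1 ord0)).
have vv := vtx_Xi_deg0 (Ordinal m_gt0).
exact: (scalar_at_uniq vv (e_neq0 vv) (c0 _) (d0 _)).
Qed.

Lemma scalar_endo_idmx : scalar_endo (idmx n e u) (idmx n e v) 1.
Proof. by split=> j; apply: scalar_at_idmx. Qed.

Lemma scalar_endo_nullhomotopic F1 F0 :
  null_homotopic n e v u D F1 F0 -> scalar_endo F1 F0 0.
Proof.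
move=> [H [hH -> ->]]; split=> j; rewrite /scalar_at scale0r subr0 mxE.
  apply: memv_suml => i _; apply: radpow_mulr => //.
  by rewrite (hH j i) offcorner_radpow // Xi_deg01_neq.
apply: memv_suml => i _; apply: radpow_mulr => //.
by rewrite (hommx_Xi_diff j i) offcorner_radpow // eq_sym Xi_deg01_neq.
Qed.

Lemma scalar_endo_quasi_idem F1 F0 c : hommx n e u u F1 -> hommx n e v v F0 ->
  scalar_endo F1 F0 c -> scalar_endo (F1 *m F1 - F1) (F0 *m F0 - F0) (c * c - c).
Proof.
move=> h1 h0 [c1 c0]; split=> j; apply: scalar_atB => //.
  exact: scalar_at_sq Xi_deg1_inj _.
exact: scalar_at_sq Xi_deg0_inj _.
Qed.

Lemma mxradpow_scalar_endo0 F1 F0 : hommx n e u u F1 -> hommx n e v v F0 ->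
  scalar_endo F1 F0 0 -> mxradpow 1 F1 /\ mxradpow 1 F0.
Proof.
move=> h1 h0 [c1 c0].
by split; [exact: mxradpow_of_scalar0 Xi_deg1_inj _ | exact: mxradpow_of_scalar0 Xi_deg0_inj _].
Qed.

Lemma scalar_endo_idmx_sub F1 F0 : scalar_endo F1 F0 1 ->
  scalar_endo (idmx n e u - F1) (idmx n e v - F0) 0.
Proof.
move=> [c1 c0]; rewrite -(subrr 1); split=> j; apply: scalar_atB.
- exact: scalar_at_idmx.
- exact: c1.
- exact: scalar_at_idmx.
- exact: c0.
Qed.

Lemma Xi_not_contractible : ~ null_homotopic n e v u D (idmx n e u) (idmx n e v).
Proof.
move=> /scalar_endo_nullhomotopic /(scalar_endo_uniq scalar_endo_idmx) /eqP.
by rewrite oner_eq0.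
Qed.

Lemma Xi_indecomposable : indecomposableK n e v u D.
Proof.
split; first exact: hommx_Xi_diff.
split; first exact: Xi_not_contractible.
move=> F1 F0 hF hid; have [h1 h0 _] := hF; have [c hc] := scalar_endo_exists hF.
have c_idem : c * c - c = 0.
  exact: scalar_endo_uniq (scalar_endo_quasi_idem h1 h0 hc) (scalar_endo_nullhomotopic hid).
have /eqP : c * (c - 1) = 0 by rewrite mulrBr mulr1.
rewrite mulf_eq0 subr_eq0 => /orP [/eqP c0 | /eqP c1].
  left; rewrite c0 in hc; have [r1 r0] := mxradpow_scalar_endo0 h1 h0 hc.
  exact: nullhomotopic_rad_quasi_idem.
right; rewrite -[F1 - _]opprB -[F0 - _]opprB; apply: nullhomotopicN.
have hG := chain_endoD (chain_endo_idmx hommx_Xi_diff) (chain_endoN hF).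
have [g1 g0 _] := hG; rewrite c1 in hc.
have [r1 r0] := mxradpow_scalar_endo0 g1 g0 (scalar_endo_idmx_sub hc).
by apply: nullhomotopic_rad_quasi_idem; rewrite ?idmx_sub_quasi_idem.
Qed.

End TwoTermComplex.

End NonzeroPaths.
End CornerIdeals.
End QuiverAlgebra.

Theorem lemma4p6 (k : closedFieldType) (A : falgType k) (n : nat) (Arr : finType)
  (src tgt : Arr -> nat) (e : nat -> A) (a : Arr -> A) :
  bound_quiver_algebra n src tgt e a ->
  condC n src tgt e a ->
  forall ii : seq nat, inXi n ii ->
  indecomposableK n e (@Xi_deg0 ii) (@Xi_deg1 ii) (Xi_diff n src tgt e a ii).
Proof.
move=> [vtx_arrow mul_e sum_e arrowE [N [_ span_e_paths pathsN _]]].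
move=> [arrow_adj arrow_unique arrow_ideal wpath_neq0] ii ii_Xi.
exact: (Xi_indecomposable vtx_arrow mul_e sum_e arrowE span_e_paths pathsN
  arrow_adj arrow_unique arrow_ideal wpath_neq0 ii_Xi).
Qed.
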